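(* Let $V$ be a vector space of dimension $\mathbf{n}\ge3$ over an algebraically closed field $\mathbf{k}$ of characteristic $p$, with bilinear form $(,)$ and quadratic form $Q$ such that either (i) $Q=0$, $(x,x)=0$ for all $x$, $V^\perp=0$; or (ii) $Q\ne0$, $(x,y)=Q(x+y)-Q(x)-Q(y)$, $Q|_{V^\perp}$ injective. Let $\kappa\in\{0,1\}$ with $\mathbf{n}-\kappa$ even, $n=(\mathbf{n}-\kappa)/2$, and assume that $Q=0$ or $p=2$. Let $p_1\ge\dots\ge p_\sigma\ge1$ be integers with sum $n$ (and $p_{\sigma+1}=1/2$ if $\kappa=1$). Let $g\in Is(V)$ be unipotent, $N=g-1$, and assume that the multiset of sizes of the Jordan blocks of $N$ on $V$ consists of $2p_1,2p_2,\dots,2p_\sigma$ (and $1$ if $\kappa=1$). Let $(w^t_i)_{t\in[1,\sigma+\kappa],i\in\mathbb{Z}}$ be a $(g,p_* )$-adapted collection. Then: (a) for $t\in[1,\sigma]$ and $\pi=p_t$: $(w^t_i,w^t_j)=\mathrm{sg}(j-i)\binom{|j-i|+\pi-1}{|j-i|-\pi}$ if $|j-i|\ge\pi$, and $(w^t_i,w^t_j)=0$ if $|j-i|<\pi$; (b) if $\kappa=1$, $(w^{\sigma+1}_i,w^{\sigma+1}_j)=0$ for all $i,j\in\mathbb{Z}$; (c) $(w^t_i,w^r_j)=0$ for all $t\ne r$ in $[1,\sigma+\kappa]$ and all $i,j\in\mathbb{Z}$.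
   Context: $V^\perp=\{x\in V;(x,V)=0\}$; $Is(V)$ is the group of $g\in GL(V)$ preserving $(,)$ and $Q$. For $i\in\mathbb{Z}-\{0\}$, $\mathrm{sg}(i)\in\{1,-1\}$ is the sign of $i$. A collection $w^t_i\in V$ is $(g,p_* )$-adapted if: (a) $w^t_{i+1}=gw^t_i$; (b) for $t\in[1,\sigma]$, $(w^t_i,w^t_j)=0$ if $|i-j|<p_t$ and $=1$ if $j-i=p_t$; (c) $(w^t_i,w^r_j)=0$ if $0\le i-j+p_r<2p_t$ and $1\le t<r\le\sigma$; (d) if $\kappa=1$, $(w^{\sigma+1}_i,w^{\sigma+1}_i)=2$; (e) if $\kappa=1$, $(w^t_i,w^{\sigma+1}_j)=0$ whenever $0\le i-j<2p_t$, $1\le t\le\sigma$; (f) $Q(w^t_i)=0$ for $t\in[1,\sigma]$ and $Q(w^{\sigma+1}_i)=1$ if $\kappa=1$. *)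

From HB Require Import structures.
From mathcomp Require Import all_boot all_order all_algebra.
Set Implicit Arguments. Unset Strict Implicit. Unset Printing Implicit Defensive.
Import Order.TTheory GRing.Theory Num.Theory.
Local Open Scope ring_scope.

Section Defs.
Variables (k : fieldType) (nn : nat).
Local Notation V := 'rV[k]_nn.

Definition bilinear_form (B : V -> V -> k) : Prop :=
  (forall (a : k) (x1 x2 y : V), B (a *: x1 + x2) y = a * B x1 y + B x2 y) /\
  (forall (a : k) (x y1 y2 : V), B x (a *: y1 + y2) = a * B x y1 + B x y2).

Definition quadratic_form (Q : V -> k) : Prop :=
  (forall (a : k) (x : V), Q (a *: x) = a ^+ 2 * Q x) /\
  bilinear_form (fun x y => Q (x + y) - Q x - Q y).

Definition in_perp (B : V -> V -> k) (x : V) : Prop := forall y : V, B x y = 0.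

Definition isometry_of (B : V -> V -> k) (Q : V -> k) (g : 'M[k]_nn) : Prop :=
  g \in unitmx /\
  (forall x y : V, B (x *m g) (y *m g) = B x y) /\
  (forall x : V, Q (x *m g) = Q x).

(* The nilpotent endomorphism v |-> v *m N of V is a direct sum of Jordan
   blocks whose sizes are the entries of s: there is a basis
   (v b j)_{b < size s, j < s_b} of V with v b j *m N = v b (j+1) for
   j+1 < s_b and v b (s_b - 1) *m N = 0. *)
Definition jordan_blocks (N : 'M[k]_nn) (s : seq nat) : Prop :=
  exists v : nat -> nat -> V,
    (forall b j, (b < size s)%N -> (j < nth 0%N s b)%N ->
       v b j *m N = if (j.+1 < nth 0%N s b)%N then v b j.+1 else 0) /\
    (forall c : nat -> nat -> k,
       \sum_(b < size s) \sum_(j < nth 0%N s b) c b j *: v b j = 0 ->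
       forall b j, (b < size s)%N -> (j < nth 0%N s b)%N -> c b j = 0) /\
    (forall x : V, exists c : nat -> nat -> k,
       x = \sum_(b < size s) \sum_(j < nth 0%N s b) c b j *: v b j).

Definition sgk (d : int) : k := if (d < 0)%R then -1 else 1.

(* (g, p_* )-adapted collection; g acts on row vectors by v |-> v *m g. *)
Definition adapted (B : V -> V -> k) (Q : V -> k) (g : 'M[k]_nn)
  (sigma kappa : nat) (p : nat -> nat) (w : nat -> int -> V) : Prop :=
  (forall t i, (1 <= t <= sigma + kappa)%N -> w t (i + 1) = w t i *m g) /\
  (forall t i j, (1 <= t <= sigma)%N ->
     ((`|i - j|%N < p t)%N -> B (w t i) (w t j) = 0) /\
     (j - i = (p t)%:Z -> B (w t i) (w t j) = 1)) /\
  (forall t r i j, (1 <= t)%N -> (t < r)%N -> (r <= sigma)%N ->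
     0 <= i - j + (p r)%:Z < (2 * p t)%:Z -> B (w t i) (w r j) = 0) /\
  (kappa = 1%N -> forall i, B (w sigma.+1 i) (w sigma.+1 i) = 2) /\
  (kappa = 1%N -> forall t i j, (1 <= t <= sigma)%N ->
     0 <= i - j < (2 * p t)%:Z -> B (w t i) (w sigma.+1 j) = 0) /\
  (forall t i, (1 <= t <= sigma)%N -> Q (w t i) = 0) /\
  (kappa = 1%N -> forall i, Q (w sigma.+1 i) = 1).

End Defs.

(* Write delta for the difference operator f |-> f(. + 1) - f on Z-indexed families,
   so that delta^q (w^t) = w^t N^q.  The heart of the proof is that N^(2 p_t) kills
   w^t (and N kills w^(sigma+1)), by induction on t: otherwise w^t_0 N^m, together
   with the vectors w^s_i N^m for s < t and 0 <= i < 2 p_s - m, would be linearly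
   independent, because the form pairs them triangularly with suitable shifts w^s_j;
   this gives more vectors in the image of N^m than the Jordan type of N allows.
   Once delta^(2 p_t) annihilates i |-> (w^t_i, w^r_j), that sequence is determined
   by 2 p_t consecutive values, which adaptedness prescribes: this yields the
   binomial Gram matrix and all the orthogonality relations.  In case (ii), (x, x) = Q(2x) - 2 Q(x) = 0 in
   characteristic 2, so in both cases the form is alternating. *)

From HB Require Import structures.
From mathcomp Require Import all_boot all_order all_algebra.
From mathcomp Require Import zify.
Import Order.TTheory GRing.Theory Num.Theory.
Set Implicit Arguments. Unset Strict Implicit. Unset Printing Implicit Defensive.
Local Open Scope ring_scope.

Lemma int_shift_ind (P : int -> Prop) a :
  P a -> (forall i, P i <-> P (i + 1)) -> forall i, P i.
Proof.
move=> Pa PS.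
have Pan n : P (a + n%:Z) /\ P (a - n%:Z).
  elim: n => [|n [IHp IHn]]; first by split; [rewrite addr0 | rewrite subr0].
  split; first by rewrite (_ : a + n.+1%:Z = a + n%:Z + 1); [apply: (PS _).1 | lia].
  by apply: (PS _).2; rewrite (_ : a - n.+1%:Z + 1 = a - n%:Z) //; lia.
move=> i; case: (lerP a i) => ai.
  by rewrite (_ : i = a + (`|i - a|%N)%:Z); [exact: (Pan _).1 | lia].
by rewrite (_ : i = a - (`|i - a|%N)%:Z); [exact: (Pan _).2 | lia].
Qed.

Section FiniteDifferences.
Variable T : zmodType.
Implicit Types f h : int -> T.

Definition delta f : int -> T := fun i => f (i + 1) - f i.

Lemma iter_deltaS q f i :
  iter q.+1 delta f i = iter q delta f (i + 1) - iter q delta f i.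
Proof. by rewrite iterS. Qed.

Lemma eq_iter_delta q f h : f =1 h -> iter q delta f =1 iter q delta h.
Proof. by elim: q => [|q IH] E i //; rewrite !iter_deltaS !IH. Qed.

Lemma iter_delta0 q f : f =1 (fun=> 0) -> iter q delta f =1 (fun=> 0).
Proof. by elim: q => [|q IH] E i //; rewrite !iter_deltaS !IH // subr0. Qed.

Lemma iter_deltaB q f h i :
  iter q delta (fun j => f j - h j) i = iter q delta f i - iter q delta h i.
Proof. by elim: q i => [|q IH] i //; rewrite !iter_deltaS !IH !opprD !opprK addrACA. Qed.

Lemma delta_eq0_const f : delta f =1 (fun=> 0) -> forall i, f i = f 0.
Proof.
move=> Df; apply: (@int_shift_ind (fun i => f i = f 0) 0) => // i.
by have /eqP := Df i; rewrite subr_eq0 => /eqP ->.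
Qed.

Lemma iter_delta_eq0 q f a : iter q delta f =1 (fun=> 0) ->
  (forall c, (c < q)%N -> f (a + c%:Z) = 0) -> f =1 (fun=> 0).
Proof.
elim: q f a => [|q IH] f a Dqf f0 i; first exact: Dqf.
have Df : delta f =1 (fun=> 0).
  apply: (IH _ a) => [j|c ltcq]; first by rewrite -iterSr.
  by rewrite /delta -addrA -PoszD addn1 !f0 ?subr0 // ltnW.
by rewrite (delta_eq0_const Df) -(delta_eq0_const Df a) -[a]addr0; apply: f0.
Qed.

End FiniteDifferences.
Arguments delta {T} f i.

Section IntegerBinomial.
Variable R : nzRingType.

(* binz x r is the binomial coefficient x(x-1)...(x-r+1)/r! for an integer x;
   for x = -(n+1) (that is, Negz n) it equals (-1)^r 'C(n + r, r). *)
Definition binz (x : int) (r : nat) : R :=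
  match x with
  | Posz n => 'C(n, r)%:R
  | Negz n => (-1) ^+ r * 'C(n + r, r)%:R
  end.

Lemma binz0 x : binz x 0 = 1.
Proof. by case: x => n /=; rewrite bin0 ?mul1r. Qed.

Lemma binzS x r : binz (x + 1) r.+1 = binz x r.+1 + binz x r.
Proof.
case: x => [n|[|n]].
- by rewrite (_ : Posz n + 1 = Posz n.+1) /= ?binS ?natrD //; lia.
- rewrite (_ : Negz 0 + 1 = 0) /=; last by lia.
  by rewrite !add0n !binn bin0n exprS mulN1r !mulr1 addNr.
rewrite (_ : Negz n.+1 + 1 = Negz n) /=; last by lia.
rewrite (addSn n r.+1) binS (addSnnS n r) natrD.
by rewrite mulrDr exprS mulN1r !mulNr subrK.
Qed.

Lemma iter_delta_binz m c r i :
  iter m delta (fun j => binz (j + c) r) i = if (m <= r)%N then binz (i + c) (r - m) else 0.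
Proof.
elim: m i => [|m IH] i; first by rewrite subn0.
rewrite iter_deltaS !IH; case: (ltngtP m r) => [ltmr|ltrm|->].
- by rewrite -(subnSK ltmr) addrAC binzS addrAC subrr add0r.
- by rewrite subr0.
by rewrite subnn !binz0 subrr.
Qed.

End IntegerBinomial.

Lemma binz_sym_window (k : fieldType) (p : nat) (d : int) : (1 <= p)%N ->
  binz k (d + (p%:Z - 1)) (2 * p - 1) =
  if (p <= `|d|%N)%N then sgk k d * 'C(`|d|%N + p - 1, `|d|%N - p)%:R else 0.
Proof.
move=> p_gt0; case: d => n.
  rewrite (_ : Posz n + (p%:Z - 1) = Posz (n + p - 1)); last by lia.
  rewrite /sgk /= mul1r; case: (leqP p n) => lepn; last by rewrite bin_small //; lia.
  rewrite (_ : (n - p = n + p - 1 - (2 * p - 1))%N); last by lia.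
  by rewrite bin_sub //; lia.
rewrite /sgk /=; case: (leqP p n.+1) => lepn.
  rewrite (_ : Negz n + (p%:Z - 1) = Negz (n.+1 - p)) /=; last by lia.
  rewrite (_ : (n.+1 - p + (2 * p - 1) = n.+1 + p - 1)%N); last by lia.
  rewrite [in RHS](_ : (n.+1 - p = n.+1 + p - 1 - (2 * p - 1))%N); last by lia.
  rewrite bin_sub; last by lia.
  rewrite -signr_odd oddB; last by lia.
  by rewrite oddM /= expr1.
rewrite (_ : Negz n + (p%:Z - 1) = Posz (p - n.+2)) /=; last by lia.
by rewrite bin_small //; lia.
Qed.

Section BilinearForms.
Variables (k : fieldType) (nn : nat) (B : 'rV[k]_nn -> 'rV[k]_nn -> k).
Hypothesis formB : bilinear_form B.
Local Notation V := 'rV[k]_nn.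

Lemma formDl x1 x2 y : B (x1 + x2) y = B x1 y + B x2 y.
Proof. by have := formB.1 1 x1 x2 y; rewrite scale1r mul1r. Qed.

Lemma formDr x y1 y2 : B x (y1 + y2) = B x y1 + B x y2.
Proof. by have := formB.2 1 x y1 y2; rewrite scale1r mul1r. Qed.

Lemma form0l y : B 0 y = 0.
Proof. by apply/(addrI (B 0 y)); rewrite -formDl !addr0. Qed.

Lemma form0r x : B x 0 = 0.
Proof. by apply/(addrI (B x 0)); rewrite -formDr !addr0. Qed.

Lemma formZl a x y : B (a *: x) y = a * B x y.
Proof. by have := formB.1 a x 0 y; rewrite addr0 form0l addr0. Qed.

Lemma formZr a x y : B x (a *: y) = a * B x y.
Proof. by have := formB.2 a x y 0; rewrite addr0 form0r addr0. Qed.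

Lemma formBl x1 x2 y : B (x1 - x2) y = B x1 y - B x2 y.
Proof. by rewrite formDl -scaleN1r formZl mulN1r. Qed.

Lemma formBr x y1 y2 : B x (y1 - y2) = B x y1 - B x y2.
Proof. by rewrite formDr -scaleN1r formZr mulN1r. Qed.

Lemma form_sumr x n (F : 'I_n -> V) : B x (\sum_(i < n) F i) = \sum_(i < n) B x (F i).
Proof. exact: (big_morph (B x) (formDr x) (form0r x)). Qed.

Lemma form_iter_deltal y q f i :
  B (iter q delta f i) y = iter q delta (fun j => B (f j) y) i.
Proof. by elim: q i => [|q IH] i //; rewrite !iter_deltaS formBl !IH. Qed.

Lemma form_iter_deltar x q f i :
  B x (iter q delta f i) = iter q delta (fun j => B x (f j)) i.
Proof. by elim: q i => [|q IH] i //; rewrite !iter_deltaS formBr !IH. Qed.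

Lemma alt_form_skew : (forall x, B x x = 0) -> forall x y, B x y = - B y x.
Proof.
move=> Balt x y; have := Balt (x + y).
by rewrite formDl !formDr !Balt add0r addr0 => /eqP; rewrite addr_eq0 => /eqP.
Qed.

Definition triangular_pair (X Y : seq V) :=
  [/\ size X = size Y,
      forall i j, (i < j < size X)%N -> B (nth 0 Y j) (nth 0 X i) = 0
    & forall i, (i < size X)%N -> B (nth 0 Y i) (nth 0 X i) != 0].

Lemma triangular_pair_coef0 X Y : triangular_pair X Y -> forall c : 'I_(size X) -> k,
  (forall j, (j < size X)%N -> B (nth 0 Y j) (\sum_(i < size X) c i *: nth 0 X i) = 0) ->
  forall i, c i = 0.
Proof.
move=> [_ lowXY diagXY] c orthc.
suff c0 n (i : 'I_(size X)) : (size X - n <= i)%N -> c i = 0.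
  by move=> i; apply: (c0 (size X)); rewrite subnn.
elim: n i => [|n IH] i lein; first by have := ltn_ord i; lia.
have [|ltin] := leqP (size X - n) i; first exact: IH.
have := orthc i (ltn_ord i); rewrite form_sumr (bigD1 i) //= big1 => [|i' ne_i'i].
  rewrite addr0 formZr => /eqP.
  by rewrite mulf_eq0 (negbTE (diagXY i (ltn_ord i))) orbF => /eqP.
rewrite formZr; have [lti'i|] := ltnP i' i; first by rewrite lowXY ?mulr0 // lti'i /=.
move=> lei'; have neq_i'i : (i' : nat) != i := ne_i'i.
by rewrite IH ?mul0r //; lia.
Qed.

Lemma triangular_pair_free X Y : triangular_pair X Y -> free X.
Proof.
move=> XY; apply/(@freeP _ _ _ (in_tuple X)) => c sum0 i.
by apply: (triangular_pair_coef0 XY) => j _; rewrite [X in B _ X]sum0 form0r.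
Qed.

Lemma triangular_pair_free_cons X Y x : triangular_pair X Y -> x != 0 ->
  (forall j, (j < size X)%N -> B (nth 0 Y j) x = 0) -> free (x :: X).
Proof.
move=> XY x_neq0 orthx; rewrite free_cons (triangular_pair_free XY) andbT.
apply: contra x_neq0 => xX; have xE := @coord_span _ _ _ (in_tuple X) x xX.
rewrite xE big1 // => i _.
rewrite (triangular_pair_coef0 XY (c := fun i => coord (in_tuple X) i x)) ?scale0r //.
by move=> j ltj; rewrite -xE orthx.
Qed.

Lemma triangular_pair_cat X1 Y1 X2 Y2 :
  triangular_pair X1 Y1 -> triangular_pair X2 Y2 ->
  (forall y x, y \in Y2 -> x \in X1 -> B y x = 0) ->
  triangular_pair (X1 ++ X2) (Y1 ++ Y2).
Proof.
move=> [sz1 low1 diag1] [sz2 low2 diag2] orth21.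
split=> [|i j|i]; rewrite ?size_cat ?sz1 ?sz2 // !nth_cat -sz1 -sz2.
- case/andP=> ltij ltj; have [ltj1|lej1] := ltnP j (size X1).
    by rewrite (ltn_trans ltij ltj1) low1 // ltij.
  have [lti1|lei1] := ltnP i (size X1).
    by apply: orth21; apply: mem_nth => //; rewrite -sz2; lia.
  by apply: low2; move: ltij ltj lej1 lei1; set s1 := size X1; lia.
move=> lti; have [lti1|lei1] := ltnP i (size X1); first exact: diag1.
by apply: diag2; lia.
Qed.

Lemma triangular_pair_flatten (T : eqType) (L : seq T) (Xf Yf : T -> seq V) :
  uniq L -> (forall s, s \in L -> triangular_pair (Xf s) (Yf s)) ->
  (forall s s' y x, s \in L -> s' \in L -> s != s' ->
     y \in Yf s' -> x \in Xf s -> B y x = 0) ->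
  triangular_pair (flatten (map Xf L)) (flatten (map Yf L)).
Proof.
elim: L => [|s L IH] /=; first by move=> *; split=> [//|i j /andP[_ //]|i //].
case/andP=> sL uL tri_s orth_s; apply: triangular_pair_cat.
- by apply: tri_s; rewrite inE eqxx.
- apply: IH => // [s' s'L|s1 s2 y x s1L s2L]; first by apply: tri_s; rewrite inE s'L orbT.
  by apply: orth_s; rewrite inE ?s1L ?s2L orbT.
move=> y x /flatten_mapP [s' s'L ys'] xs; apply: (orth_s s s') => //.
- by rewrite inE eqxx.
- by rewrite inE s'L orbT.
by apply: contraNneq sL => ->.
Qed.

End BilinearForms.

Section JordanImage.
Variables (k : fieldType) (nn : nat) (N : 'M[k]_nn) (s : seq nat).
Local Notation V := 'rV[k]_nn.

Lemma jordan_chain_mulmx_exp (v : nat -> nat -> V) :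
  (forall b j, (b < size s)%N -> (j < nth 0%N s b)%N ->
     v b j *m N = if (j.+1 < nth 0%N s b)%N then v b j.+1 else 0) ->
  forall b j a, (b < size s)%N -> (j < nth 0%N s b)%N ->
  v b j *m N ^+ a = if (j + a < nth 0%N s b)%N then v b (j + a)%N else 0.
Proof.
move=> vN b j a ltb ltj; elim: a => [|a IH]; first by rewrite expr0 mulmx1 addn0 ltj.
rewrite exprSr -mulmxE mulmxA IH; case: ltnP => [ltja|leja].
  by rewrite vN // addnS.
by rewrite mul0mx ifN //; lia.
Qed.

(* The image of N^m is spanned by the last (s_b - m) vectors of each Jordan chain. *)
Lemma jordan_free_image_size m (X : seq V) : jordan_blocks N s -> free X ->
  (forall x, x \in X -> exists u, x = u *m N ^+ m) ->
  (size X <= \sum_(b < size s) (nth 0%N s b - m))%N.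
Proof.
case=> v [vN [_ span_v]] freeX imX.
pose U := (\sum_(b < size s) <<[seq v b j | j <- iota m (nth 0%N s b - m)]>>)%VS.
have imU u : u *m N ^+ m \in U.
  have [c ->] := span_v u; rewrite mulmx_suml; apply: memv_suml => b _.
  rewrite mulmx_suml; apply: memv_suml => j _; rewrite -scalemxAl; apply: memvZ.
  rewrite (jordan_chain_mulmx_exp vN) //; case: ifP => [ltjm|_]; last exact: mem0v.
  apply: (subvP (sumv_sup b _ (subvv _))) => //.
  by apply/memv_span/map_f; rewrite mem_iota; lia.
have XU : (<<X>> <= U)%VS by apply/span_subvP => x /imX [u ->].
rewrite -(eqP freeX) (leq_trans (dimvS XU)) // (leq_trans (dimv_leq_sum _ _ _)) //.
by apply: leq_sum => b _; rewrite (leq_trans (dim_span _)) // size_map size_iota.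
Qed.

End JordanImage.

Section AdaptedCollection.
Variables (k : fieldType) (nn : nat).
Local Notation V := 'rV[k]_nn.
Variables (B : V -> V -> k) (Q : V -> k) (kappa sigma : nat) (p : nat -> nat).
Variables (g : 'M[k]_nn) (w : nat -> int -> V).
Hypothesis formB : bilinear_form B.
Hypothesis Balt : forall x, B x x = 0.
Hypothesis kappa_le1 : (kappa <= 1)%N.
Hypothesis p_nonincr : forall t, (1 <= t)%N -> (t < sigma)%N -> (p t.+1 <= p t)%N.
Hypothesis p_gt0 : forall t, (1 <= t <= sigma)%N -> (0 < p t)%N.
Hypothesis g_unit : g \in unitmx.
Local Notation jsizes := ([seq (2 * p t)%N | t <- iota 1 sigma] ++ nseq kappa 1%N).
Hypothesis g_jordan : jordan_blocks (g - 1%:M) jsizes.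
Hypothesis w_adapted : adapted B Q g sigma kappa p w.
Local Notation N := (g - 1%:M).

Lemma adapted_shift t i : (1 <= t <= sigma + kappa)%N -> w t (i + 1) = w t i *m g.
Proof. by case: w_adapted => shift_w _; apply: shift_w. Qed.

Lemma adapted_gram_near t i j : (1 <= t <= sigma)%N -> (`|i - j|%N < p t)%N ->
  B (w t i) (w t j) = 0.
Proof. by case: w_adapted => _ [gram_w _] ht; apply: (gram_w t i j ht).1. Qed.

Lemma adapted_gram_p t i j : (1 <= t <= sigma)%N -> j - i = (p t)%:Z ->
  B (w t i) (w t j) = 1.
Proof. by case: w_adapted => _ [gram_w _] ht; apply: (gram_w t i j ht).2. Qed.

Lemma adapted_cross t r i j : (1 <= t)%N -> (t < r)%N -> (r <= sigma)%N ->
  0 <= i - j + (p r)%:Z < (2 * p t)%:Z -> B (w t i) (w r j) = 0.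
Proof. by case: w_adapted => _ [_ [cross_w _]]; apply: cross_w. Qed.

Lemma adapted_cross_last t i j : kappa = 1%N -> (1 <= t <= sigma)%N ->
  0 <= i - j < (2 * p t)%:Z -> B (w t i) (w sigma.+1 j) = 0.
Proof. by case: w_adapted => _ [_ [_ [_ [cross_w _]]]] k1; apply: cross_w. Qed.

Lemma iter_delta_adapted t q i : (1 <= t <= sigma + kappa)%N ->
  iter q delta (w t) i = w t i *m N ^+ q.
Proof.
move=> ht; elim: q i => [|q IH] i; first by rewrite expr0 mulmx1.
rewrite iter_deltaS !IH adapted_shift // -mulmxBl -{2}(mulmx1 (w t i)) -mulmxBr.
by rewrite -mulmxA mulmxE -exprS.
Qed.

Lemma adapted_mulmx_exp_eq0 t q : (1 <= t <= sigma + kappa)%N ->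
  w t 0 *m N ^+ q = 0 -> forall i, w t i *m N ^+ q = 0.
Proof.
move=> ht w0N; apply: (@int_shift_ind (fun i => w t i *m N ^+ q = 0) 0) => // i.
have gN : g * N ^+ q = N ^+ q * g by apply/commrX/commrB; [exact: commr_refl | exact: commr1].
rewrite adapted_shift // -mulmxA mulmxE gN -mulmxE mulmxA.
split=> [->|wgN0]; first by rewrite mul0mx.
by rewrite -(mulmxK g_unit (w t i *m N ^+ q)) wgN0 mul0mx.
Qed.

(* The size of the Jordan block that w^t_0 is expected to generate. *)
Definition block_size t := if (t <= sigma)%N then (2 * p t)%N else 1%N.

Definition annihilated t := w t 0 *m N ^+ block_size t = 0.

Lemma adapted_gram s i j : (1 <= s <= sigma)%N -> annihilated s ->
  B (w s i) (w s j) = binz k (j + ((p s)%:Z - 1 - i)) (2 * p s - 1).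
Proof.
move=> hs ann_s; have hs' : (1 <= s <= sigma + kappa)%N by lia.
have ps_gt0 := p_gt0 hs.
have bsz : block_size s = (2 * p s)%N by rewrite /block_size; case/andP: hs => _ ->.
pose f j := B (w s i) (w s j) - binz k (j + ((p s)%:Z - 1 - i)) (2 * p s - 1).
apply/eqP; rewrite -subr_eq0 -/(f j); apply/eqP; move: j.
apply: (@iter_delta_eq0 _ (2 * p s) f (i - (p s)%:Z + 1)) => [j|c ltc].
  rewrite iter_deltaB -(form_iter_deltar formB) (@iter_delta_binz k) ifN; last by lia.
  by rewrite iter_delta_adapted // -bsz (adapted_mulmx_exp_eq0 hs' ann_s) (form0r formB) subrr.
rewrite /f (_ : i - (p s)%:Z + 1 + c%:Z + ((p s)%:Z - 1 - i) = c); last by lia.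
have [ltc1|lec1] := ltnP c (2 * p s - 1).
  by rewrite adapted_gram_near //= ?bin_small ?subrr //; lia.
rewrite adapted_gram_p //=; last by lia.
by rewrite (_ : c = 2 * p s - 1)%N ?binn ?subrr //; lia.
Qed.

Lemma adapted_orth_lt s r i j : (1 <= s)%N -> (s < r)%N -> (r <= sigma + kappa)%N ->
  annihilated s -> B (w s i) (w r j) = 0.
Proof.
move=> s_ge1 ltsr le_r ann_s; have hs : (1 <= s <= sigma)%N by lia.
have bsz : block_size s = (2 * p s)%N by rewrite /block_size; case/andP: hs => _ ->.
have Dq : iter (2 * p s) delta (fun i => B (w s i) (w r j)) =1 (fun=> 0).
  move=> i'; rewrite -(form_iter_deltal formB) iter_delta_adapted; last by lia.
  by rewrite -bsz (adapted_mulmx_exp_eq0 _ ann_s) ?(form0l formB) //; lia.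
have [ler|ltr] := leqP r sigma.
  apply: (iter_delta_eq0 (a := j - (p r)%:Z) Dq _ i) => c ltc.
  by apply: adapted_cross => //; lia.
have [k1 r_last] : kappa = 1%N /\ r = sigma.+1 by lia.
apply: (iter_delta_eq0 (a := j) Dq _ i) => c ltc.
by rewrite r_last; apply: adapted_cross_last => //; lia.
Qed.

Lemma adapted_orth s r i j : (1 <= s <= sigma + kappa)%N -> (1 <= r <= sigma + kappa)%N ->
  s != r -> annihilated s -> annihilated r -> B (w s i) (w r j) = 0.
Proof.
move=> hs hr neq_sr ann_s ann_r; case: ltngtP neq_sr => // [ltsr|ltrs] _.
  by apply: adapted_orth_lt => //; lia.
by rewrite (alt_form_skew formB Balt) (@adapted_orth_lt r s) ?oppr0 //; lia.
Qed.

Lemma form_adapted_exp_eq0 y s b m : (1 <= s <= sigma + kappa)%N ->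
  (forall c, B y (w s c) = 0) -> B y (w s b *m N ^+ m) = 0.
Proof.
by move=> hs orth_y; rewrite -iter_delta_adapted // (form_iter_deltar formB) iter_delta0.
Qed.

Lemma adapted_gram_exp s a b m : (1 <= s <= sigma)%N -> annihilated s ->
  (m <= 2 * p s - 1)%N ->
  B (w s a) (w s b *m N ^+ m) = binz k (b + ((p s)%:Z - 1 - a)) (2 * p s - 1 - m).
Proof.
move=> hs ann_s lem; rewrite -iter_delta_adapted; last by lia.
rewrite (form_iter_deltar formB) (eq_iter_delta _ (fun j => adapted_gram a j hs ann_s)).
by rewrite (@iter_delta_binz k) lem.
Qed.

Definition chain_images m s := [seq w s i%:Z *m N ^+ m | i <- iota 0 (2 * p s - m)].
(* Shifted by m - p_s so that pairing with chain_images m s is unitriangular. *)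
Definition chain_duals m s := [seq w s (i%:Z + m%:Z - (p s)%:Z) | i <- iota 0 (2 * p s - m)].

Lemma chain_triangular m s : (1 <= s <= sigma)%N -> annihilated s ->
  triangular_pair B (chain_images m s) (chain_duals m s).
Proof.
move=> hs ann_s; rewrite /chain_images /chain_duals.
split=> [|i j|i]; rewrite ?size_map ?size_iota //.
  case/andP=> ltij ltj; rewrite !(nth_map 0%N) ?size_iota ?nth_iota ?add0n; try lia.
  rewrite adapted_gram_exp //; last by lia.
  rewrite (_ : _ + _ = Posz (2 * p s - 1 - m - (j - i))); last by lia.
  by rewrite /= bin_small //; lia.
move=> lti; rewrite !(nth_map 0%N) ?size_iota ?nth_iota ?add0n; try lia.
rewrite adapted_gram_exp //; last by lia.
rewrite (_ : _ + _ = Posz (2 * p s - 1 - m)); last by lia.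
by rewrite /= binn oner_neq0.
Qed.

Lemma p_antitone t s : (1 <= t)%N -> (t <= s)%N -> (s <= sigma)%N -> (p s <= p t)%N.
Proof.
move=> t_ge1; elim: s => [|s IH] le_ts le_s; first by lia.
have [<- //|ne_ts] := eqVneq t s.+1.
by apply: leq_trans (p_nonincr _ _) (IH _ _); lia.
Qed.

(* Only the Jordan blocks of the w^s with s < t are longer than the block size of t. *)
Lemma jordan_excess_le t : (1 <= t <= sigma + kappa)%N ->
  (\sum_(b < size jsizes) (nth 0%N jsizes b - block_size t)
     <= \sum_(s <- iota 1 t.-1) (2 * p s - block_size t))%N.
Proof.
move=> ht; rewrite -(big_mkord xpredT (fun b => nth 0%N jsizes b - block_size t)%N).
rewrite -(big_nth 0%N xpredT (fun x => x - block_size t)%N) big_cat /= big_map.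
have bsz_ge1 : (1 <= block_size t)%N.
  by rewrite /block_size; case: ifP => // le_t; have := @p_gt0 t; lia.
rewrite [X in (_ + X)%N]big1_seq ?addn0 => [|x /andP[_]]; last first.
  by rewrite mem_nseq => /andP[_ /eqP ->]; lia.
have [le_t|lt_t] := leqP t sigma; last by rewrite (_ : t.-1 = sigma) //; lia.
rewrite (_ : sigma = t.-1 + (sigma - t.-1))%N; last by lia.
rewrite iotaD big_cat /= [X in (_ + X <= _)%N]big1_seq ?addn0 // => s /andP[_].
rewrite mem_iota /block_size le_t => hs; have := @p_antitone t s; lia.
Qed.

(* If w^t_0 N^m were nonzero (m = block_size t), it would extend the triangular
   family built from the chains of the w^s, s < t, to a free family in the image
   of N^m that is too large for the Jordan type of N. *)
Lemma annihilated_step t : (1 <= t <= sigma + kappa)%N ->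
  (forall s, (1 <= s)%N -> (s < t)%N -> annihilated s) -> annihilated t.
Proof.
move=> ht ann_lt; rewrite /annihilated; set m := block_size t.
have [//|x_neq0] := eqVneq (w t 0 *m N ^+ m) 0; exfalso.
pose L := iota 1 t.-1.
have memL s : s \in L -> (1 <= s)%N /\ (s < t)%N by rewrite mem_iota; lia.
have triL : triangular_pair B (flatten (map (chain_images m) L)) (flatten (map (chain_duals m) L)).
  apply: triangular_pair_flatten; first exact: iota_uniq.
    by move=> s /memL [s_ge1 lt_st]; apply: chain_triangular (ann_lt s _ _) => //; lia.
  move=> s s' _ _ /memL [s_ge1 lt_st] /memL [s'_ge1 lt_s't] ne_ss' /mapP [a _ ->] /mapP [b _ ->].
  apply: form_adapted_exp_eq0 => [|c]; first by lia.
  by apply: adapted_orth; try lia; apply: ann_lt; lia.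
have freeX : free (w t 0 *m N ^+ m :: flatten (map (chain_images m) L)).
  apply: (triangular_pair_free_cons formB triL x_neq0) => j.
  case: triL => -> _ _ /(mem_nth 0) /flatten_mapP [s /memL [s_ge1 lt_st] /mapP [a _ ->]].
  apply: form_adapted_exp_eq0 => // c.
  by apply: adapted_orth_lt (ann_lt s _ _) => //; lia.
have imX x : x \in w t 0 *m N ^+ m :: flatten (map (chain_images m) L) ->
    exists u, x = u *m N ^+ m.
  by rewrite inE => /orP [/eqP -> | /flatten_mapP [s _ /mapP [i _ ->]]]; eexists.
have sizeX : size (flatten (map (chain_images m) L)) = (\sum_(s <- L) (2 * p s - m))%N.
  rewrite size_flatten /shape -map_comp sumnE big_map.
  by apply: eq_bigr => s _; rewrite /= size_map size_iota.
have := jordan_free_image_size g_jordan freeX imX; rewrite /= sizeX.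
by move/leq_trans/(_ (jordan_excess_le ht)); rewrite ltnn.
Qed.

Lemma annihilated_all t : (1 <= t <= sigma + kappa)%N -> annihilated t.
Proof.
elim/ltn_ind: t => t IH ht; apply: annihilated_step => // s s_ge1 lt_st.
by apply: IH => //; lia.
Qed.

Lemma adapted_gram_binomial t i j : (1 <= t <= sigma)%N ->
  B (w t i) (w t j) =
    if (p t <= `|j - i|%N)%N
    then sgk k (j - i) * 'C(`|j - i|%N + p t - 1, `|j - i|%N - p t)%:R
    else 0.
Proof.
move=> ht; have ht' : (1 <= t <= sigma + kappa)%N by lia.
rewrite (adapted_gram _ _ ht (annihilated_all ht')).
rewrite (_ : j + ((p t)%:Z - 1 - i) = (j - i) + ((p t)%:Z - 1)); last by lia.
by rewrite binz_sym_window ?p_gt0.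
Qed.

Lemma adapted_gram_last : kappa = 1%N -> forall i j, B (w sigma.+1 i) (w sigma.+1 j) = 0.
Proof.
move=> k1 i j; have hlast : (1 <= sigma.+1 <= sigma + kappa)%N by lia.
have wN0 := adapted_mulmx_exp_eq0 hlast (annihilated_all hlast).
rewrite /block_size ltnn expr1 in wN0.
have wg i' : w sigma.+1 i' *m g = w sigma.+1 i'.
  by apply/eqP; rewrite -subr_eq0 -{2}[w _ i']mulmx1 -mulmxBr wN0.
have w_const : forall i, w sigma.+1 i = w sigma.+1 0.
  by apply: (@int_shift_ind (fun i => w sigma.+1 i = w sigma.+1 0) 0) => // i';
    rewrite adapted_shift // wg.
by rewrite (w_const i) (w_const j) Balt.
Qed.

Lemma adapted_orth_all t r i j :
  (1 <= t <= sigma + kappa)%N -> (1 <= r <= sigma + kappa)%N -> t <> r ->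
  B (w t i) (w r j) = 0.
Proof. by move=> ht hr /eqP ne_tr; apply: adapted_orth => //; apply: annihilated_all. Qed.

End AdaptedCollection.

Lemma polar_form_alt_pchar2 (k : fieldType) (nn : nat) (B : 'rV[k]_nn -> 'rV[k]_nn -> k)
    (Q : 'rV[k]_nn -> k) :
  quadratic_form Q -> (forall x y, B x y = Q (x + y) - Q x - Q y) -> 2%N \in [pchar k] ->
  forall x, B x x = 0.
Proof.
move=> formQ polarB char2 x.
rewrite polarB -mulr2n -scaler_nat formQ.1 (pcharf0 char2) expr0n mul0r sub0r -opprD.
by rewrite -mulr2n -mulr_natr (pcharf0 char2) mulr0 oppr0.
Qed.

Theorem proposition1p6 (k : closedFieldType) (nn : nat)
  (B : 'rV[k]_nn -> 'rV[k]_nn -> k) (Q : 'rV[k]_nn -> k)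
  (kappa sigma : nat) (p : nat -> nat) (g : 'M[k]_nn)
  (w : nat -> int -> 'rV[k]_nn) :
  (3 <= nn)%N ->
  bilinear_form B -> quadratic_form Q ->
  ((forall x, Q x = 0) /\ (forall x, B x x = 0) /\
     (forall x, in_perp B x -> x = 0))
  \/
  ((exists x, Q x != 0) /\ (forall x y, B x y = Q (x + y) - Q x - Q y) /\
     (forall x y, in_perp B x -> in_perp B y -> Q x = Q y -> x = y)) ->
  (kappa <= 1)%N -> ~~ odd (nn - kappa) ->
  (forall x, Q x = 0) \/ 2%N \in [pchar k] ->
  (forall t, (1 <= t)%N -> (t < sigma)%N -> (p t.+1 <= p t)%N) ->
  (forall t, (1 <= t <= sigma)%N -> (1 <= p t)%N) ->
  (\sum_(1 <= t < sigma.+1) p t)%N = ((nn - kappa)./2)%N ->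
  isometry_of B Q g ->
  (exists m, (g - 1%:M) ^+ m = 0) ->
  jordan_blocks (g - 1%:M) ([seq (2 * p t)%N | t <- iota 1 sigma] ++ nseq kappa 1%N) ->
  adapted B Q g sigma kappa p w ->
  (* (a) *)
  (forall t i j, (1 <= t <= sigma)%N ->
     B (w t i) (w t j) =
       if (p t <= `|j - i|%N)%N
       then sgk k (j - i) * ('C(`|j - i|%N + p t - 1, `|j - i|%N - p t))%:R
       else 0) /\
  (* (b) *)
  (kappa = 1%N -> forall i j, B (w sigma.+1 i) (w sigma.+1 j) = 0) /\
  (* (c) *)
  (forall t r i j, (1 <= t <= sigma + kappa)%N -> (1 <= r <= sigma + kappa)%N ->
     t <> r -> B (w t i) (w r j) = 0).
Proof.
move=> _ formB formQ forms kappa_le1 _ Q0_or_char2 p_nonincr p_gt0 _ [g_unit _] _ g_jordan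
  w_adapted.
have Balt : forall x, B x x = 0.
  case: forms => [[_ [Balt _]] // | [[x0 Qx0_neq0] [polarB _]]].
  case: Q0_or_char2 => [Q0 | char2]; last exact: (polar_form_alt_pchar2 formQ).
  by rewrite Q0 eqxx in Qx0_neq0.
split; [|split].
- exact: (adapted_gram_binomial formB Balt kappa_le1 p_nonincr p_gt0 g_unit g_jordan w_adapted).
- exact: (adapted_gram_last formB Balt kappa_le1 p_nonincr p_gt0 g_unit g_jordan w_adapted).
exact: (adapted_orth_all formB Balt kappa_le1 p_nonincr p_gt0 g_unit g_jordan w_adapted).
Qed.
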